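(* $K_4$ is strongly $4$-edge-orientable.
   Context: An orientation of a graph $H$ is any digraph obtained by replacing each edge $uv$ with the arc $(u,v)$, with the arc $(v,u)$, or with both arcs. A kernel of a digraph $D$ is an independent set $S$ such that every vertex of $D-S$ has an out-neighbor in $S$. $D$ is kernel-perfect if every induced subdigraph of $D$ has a kernel. For $f:V(H)\to\mathbb{N}$, an orientation $D$ of $H$ is $f$-kernel-perfect if it is kernel-perfect and $f(v)\ge 1+d^+_D(v)$ for all $v$. For $f:E(G)\to\mathbb{N}$, $G$ is $f$-edge-orientable if its line graph $L(G)$ admits an $f$-kernel-perfect orientation. For $v\in V(G)$, define $f_{k,v}:E(G)\to\mathbb{N}$ by $f_{k,v}(e)=d_G(v)$ if $e$ is incident to $v$, and $f_{k,v}(e)=k$ otherwise. $G$ is strongly $k$-edge-orientable if $G$ is $f_{k,v}$-edge-orientable for every $v\in V(G)$. *)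

From mathcomp Require Import all_boot.
Set Implicit Arguments. Unset Strict Implicit. Unset Printing Implicit Defensive.

Definition simple_graph (V : finType) (adj : rel V) : Prop :=
  irreflexive adj /\ symmetric adj.

Definition is_edge (V : finType) (adj : rel V) (e : {set V}) : bool :=
  [exists x, exists y, adj x y && (e == [set x; y])].

Notation edge adj := {e : {set _} | is_edge adj e}.

Definition line_adj (V : finType) (adj : rel V) : rel (edge adj) :=
  fun e f => (e != f) && (val e :&: val f != set0).

Definition orientation (T : finType) (adjH : rel T) (a : rel T) : Prop :=
  (forall u v, a u v -> adjH u v) /\ (forall u v, adjH u v -> a u v || a v u).

Definition kernel_of (T : finType) (a : rel T) (S K : {set T}) : Prop :=
  K \subset S /\
  (forall x y, x \in K -> y \in K -> ~~ a x y) /\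
  (forall x, x \in S :\: K -> exists2 y, y \in K & a x y).

Definition kernel_perfect (T : finType) (a : rel T) : Prop :=
  forall S : {set T}, exists K : {set T}, kernel_of a S K.

Definition outdeg (T : finType) (a : rel T) (v : T) : nat := #|[set w | a v w]|.

Definition f_kernel_perfect_orientation (T : finType) (adjH : rel T)
  (f : T -> nat) (a : rel T) : Prop :=
  orientation adjH a /\ kernel_perfect a /\ (forall v, 1 + outdeg a v <= f v).

Definition f_edge_orientable (V : finType) (adj : rel V) (f : edge adj -> nat) : Prop :=
  exists a : rel (edge adj), f_kernel_perfect_orientation (@line_adj V adj) f a.

Definition degree (V : finType) (adj : rel V) (v : V) : nat := #|[set w | adj v w]|.

Definition f_kv (V : finType) (adj : rel V) (k : nat) (v : V) : edge adj -> nat :=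
  fun e => if v \in val e then degree adj v else k.

Definition strongly_edge_orientable (V : finType) (adj : rel V) (k : nat) : Prop :=
  forall v : V, @f_edge_orientable V adj (@f_kv V adj k v).

Definition K4_adj : rel 'I_4 := fun x y => x != y.

From mathcomp Require Import all_boot.
Set Implicit Arguments. Unset Strict Implicit. Unset Printing Implicit Defensive.

(* The line graph of K_4 is the octahedron, whose edges at v form a triangle
   of vertices that may only have out-degree 2.  No acyclic orientation works
   (the last vertex of a topological order would have out-degree 4), so the
   orientations must contain directed cycles and kernel-perfectness has to be
   checked.  We give an explicit orientation for v = 0 and transport it to any
   v along the transposition (0 v), an automorphism of K_4.  Coding every edge
   by the sorted list of its endpoints turns the three required properties into
   finite boolean checks on lists, which are decided by computation. *)

Fixpoint powerseq (T : Type) (s : seq T) : seq (seq T) :=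
  if s is x :: s' then [seq x :: t | t <- powerseq s'] ++ powerseq s' else [:: [::]].

Lemma filter_in_powerseq (T : eqType) (P : pred T) (s : seq T) :
  filter P s \in powerseq s.
Proof.
elim: s => [|x s IHs] //=; rewrite mem_cat.
by case: (P x); rewrite ?map_f ?IHs ?orbT.
Qed.

Lemma powerseq_subset (T : eqType) (s t : seq T) : t \in powerseq s -> {subset t <= s}.
Proof.
elim: s t => [|x s IHs] t /=; first by rewrite inE => /eqP ->.
rewrite mem_cat => /orP [/mapP [u /IHs sub_us ->] | /IHs sub_ts] y.
- by rewrite !inE => /orP [-> // | /sub_us ->]; rewrite orbT.
- by move/sub_ts; rewrite inE orbC => ->.
Qed.

Section SeqDigraph.
Variable C : eqType.
Implicit Types (a L : rel C) (s S K : seq C).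

Definition seq_orientation L a s : bool :=
  all (fun x => all (fun y => (a x y ==> L x y) && (L x y ==> a x y || a y x)) s) s.

Definition seq_kernel a S K : bool :=
  all (fun x => ~~ has (a x) K) K && all (fun x => (x \in K) || has (a x) K) S.

Definition seq_kernel_perfect a s : bool :=
  all (fun S => has (seq_kernel a S) (powerseq S)) (powerseq s).

End SeqDigraph.

Section CodedDigraph.
Variables (T : finType) (C : eqType) (code : T -> C) (codes : seq C).
Hypotheses (code_inj : injective code) (mem_codes : codes =i codom code).

Lemma orientation_relpre (adjH : rel T) (L a : rel C) :
  adjH =2 relpre code L -> seq_orientation L a codes -> orientation adjH (relpre code a).
Proof.
move=> adjHE /allP orient.
have code_mem z : code z \in codes by rewrite mem_codes codom_f.
split=> x y; rewrite adjHE /=;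
  by have /allP /(_ _ (code_mem y)) /andP [/implyP ? /implyP ?] := orient _ (code_mem x).
Qed.

Lemma kernel_perfect_relpre (a : rel C) :
  seq_kernel_perfect a codes -> kernel_perfect (relpre code a).
Proof.
move=> /allP kp S.
pose SC := [seq c <- codes | c \in [seq code x | x in S]].
have /hasP [K /powerseq_subset sub_K_SC /andP [/allP indepK /allP domK]] :=
  kp SC (filter_in_powerseq _ _).
exists [set x | code x \in K]; split; [|split].
- apply/subsetP => x; rewrite inE => /sub_K_SC.
  by rewrite mem_filter => /andP [/imageP [y yS /code_inj ->] _].
- move=> x y; rewrite !inE => xK yK; apply: contraNN (indepK _ xK) => axy.
  by apply/hasP; exists (code y).
- move=> x; rewrite !inE => /andP [xK xS].
  have: code x \in SC by rewrite mem_filter image_f // mem_codes codom_f.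
  move=> /domK; rewrite (negbTE xK) => /hasP [c cK axc].
  have: c \in codes by have := sub_K_SC _ cK; rewrite mem_filter => /andP [].
  by rewrite mem_codes => /codomP [y cE]; exists y; rewrite /= ?inE -cE.
Qed.

Hypothesis codes_uniq : uniq codes.

Lemma outdeg_relpre (a : rel C) x : outdeg (relpre code a) x = count (a (code x)) codes.
Proof.
rewrite /outdeg -(size_image code) -size_filter; apply: perm_size.
apply: uniq_perm; first by rewrite map_inj_uniq ?enum_uniq.
  exact: filter_uniq.
move=> c; rewrite mem_filter; apply/imageP/andP => [[y] | [acx]].
- by rewrite inE => axy ->; rewrite mem_codes codom_f.
- by rewrite mem_codes => /codomP [y cE]; exists y; rewrite ?inE /= -cE.
Qed.

End CodedDigraph.

Section CompleteGraphEdges.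
Variable n : nat.

Definition complete_adj : rel 'I_n := fun x y => x != y.

Lemma degree_complete v : degree complete_adj v = n.-1.
Proof.
rewrite /degree; have -> : [set w | complete_adj v w] = [set~ v].
  by apply/setP => w; rewrite !inE eq_sym.
by rewrite cardsC1 card_ord.
Qed.

Definition edge_code (e : edge complete_adj) : seq nat := [seq val x | x <- enum (val e)].

Definition pair_codes : seq (seq nat) := [seq [:: i; j] | j <- iota 0 n, i <- iota 0 j].

Definition code_adj (c d : seq nat) : bool := (c != d) && has (mem d) c.

Lemma map_val_enum_set (P : pred nat) :
  [seq val x | x <- enum [set x : 'I_n | P (val x)]] = [seq i <- iota 0 n | P i].
Proof.
rewrite /enum_mem -enumT -val_enum_ord filter_map.
by congr (map _ _); apply: eq_filter => x; rewrite /= inE.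
Qed.

Lemma filter_iota_pair i j : i < j < n -> [seq k <- iota 0 n | k \in [:: i; j]] = [:: i; j].
Proof.
case/andP => lt_ij lt_jn; apply: (irr_sorted_eq ltn_trans ltnn).
- exact/sorted_filter/iota_ltn_sorted/ltn_trans.
- by rewrite /= lt_ij.
move=> k; rewrite mem_filter mem_iota add0n andb_idr // !inE.
by case/orP => /eqP ->; rewrite // (ltn_trans lt_ij).
Qed.

Lemma mem_edge_code v e : (val v \in edge_code e) = (v \in val e).
Proof. by rewrite mem_map ?mem_enum //; apply: val_inj. Qed.

Lemma edge_code_inj : injective edge_code.
Proof.
move=> e f codeE; apply/val_inj/setP => x.
by rewrite -!mem_edge_code codeE.
Qed.

Lemma line_adj_code e f : line_adj e f = code_adj (edge_code e) (edge_code f).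
Proof.
rewrite /line_adj /code_adj (inj_eq edge_code_inj); congr andb.
apply/set0Pn/hasP => [[x] | [i /mapP [x xe ->]]].
- by rewrite inE -!mem_edge_code => /andP [xe xf]; exists (val x).
- by rewrite mem_enum in xe => xf; exists x; rewrite inE xe -mem_edge_code.
Qed.

Lemma pair_edge_code i j : i < j < n ->
  exists e : edge complete_adj, edge_code e = [:: i; j].
Proof.
move=> lt_ijn; have /andP [lt_ij lt_jn] := lt_ijn; have lt_in := ltn_trans lt_ij lt_jn.
pose A := [set x : 'I_n | val x \in [:: i; j]].
have A_edge : is_edge complete_adj A.
  apply/existsP; exists (Ordinal lt_in); apply/existsP; exists (Ordinal lt_jn).
  rewrite /complete_adj -val_eqE /= ltn_eqF //=.
  by apply/eqP/setP => x; rewrite !inE -!val_eqE.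
by exists (Sub A A_edge); rewrite /edge_code /= map_val_enum_set filter_iota_pair.
Qed.

Lemma mem_pair_codes : pair_codes =i codom edge_code.
Proof.
move=> c; apply/allpairsPdep/codomP => [[j [i [jn ij ->]]] | [e ->]].
- rewrite !mem_iota /= in jn ij.
  by have [e <-] := @pair_edge_code i j ltac:(by rewrite ij); exists e.
- have /existsP [x /existsP [y /andP [xy /eqP eE]]] := valP e.
  wlog lt_xy : x y xy eE / val x < val y.
    move=> wlog_xy; case: (ltngtP (val x) (val y)) => [lt_xy | lt_yx | /val_inj exy].
    - exact: wlog_xy lt_xy.
    - by apply: (wlog_xy y x); rewrite /complete_adj /= 1?eq_sym ?eE 1?setUC.
    - by rewrite exy /complete_adj /= eqxx in xy.
  exists (val y), (val x); rewrite !mem_iota /= ltn_ord lt_xy; split=> //.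
  rewrite /edge_code; have -> : val e = [set z : 'I_n | val z \in [:: val x; val y]].
    by rewrite eE; apply/setP => z; rewrite !inE -!val_eqE.
  by rewrite map_val_enum_set filter_iota_pair // lt_xy ltn_ord.
Qed.

End CompleteGraphEdges.

Definition tperm0 (v i : nat) : nat := if i == 0 then v else if i == v then 0 else i.

Definition K4_arcs0 : seq (seq nat * seq nat) :=
  [:: ([:: 0; 1], [:: 0; 2]); ([:: 0; 1], [:: 0; 3]);
      ([:: 0; 2], [:: 0; 3]); ([:: 0; 2], [:: 2; 3]);
      ([:: 1; 2], [:: 0; 1]); ([:: 1; 2], [:: 0; 2]); ([:: 1; 2], [:: 2; 3]);
      ([:: 1; 3], [:: 0; 1]); ([:: 1; 3], [:: 0; 3]); ([:: 1; 3], [:: 1; 2]);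
      ([:: 2; 3], [:: 0; 3]); ([:: 2; 3], [:: 1; 2]); ([:: 2; 3], [:: 1; 3])].

Definition K4_arc (v : nat) : rel (seq nat) :=
  fun c d => let relabel c := sort leq (map (tperm0 v) c) in
             (relabel c, relabel d) \in K4_arcs0.

Lemma K4_certificate :
  all (fun v => [&& seq_orientation code_adj (K4_arc v) (pair_codes 4),
                    seq_kernel_perfect (K4_arc v) (pair_codes 4)
                  & all (fun c => 1 + count (K4_arc v c) (pair_codes 4) <= if v \in c then 3 else 4)
                        (pair_codes 4)])
      (iota 0 4).
Proof. by vm_compute. Qed.

Theorem mainTheorem14 : strongly_edge_orientable K4_adj 4.
Proof.
move=> v; exists (relpre (@edge_code 4) (K4_arc v)).
have v_lt4 : val v \in iota 0 4 by rewrite mem_iota ltn_ord.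
have /and3P [orient kp outdeg_ok] := allP K4_certificate _ v_lt4.
have codes_uniq : uniq (pair_codes 4) by [].
split; [|split].
- (* [K4_adj] is [complete_adj 4] only up to unfolding, hence a plain [exact]. *)
  exact (orientation_relpre (@mem_pair_codes 4) (@line_adj_code 4) orient).
- exact: kernel_perfect_relpre (@edge_code_inj 4) (@mem_pair_codes 4) _ kp.
- move=> e; rewrite (outdeg_relpre (@edge_code_inj 4) (@mem_pair_codes 4) codes_uniq).
  rewrite /f_kv -mem_edge_code degree_complete.
  have code_mem : edge_code e \in pair_codes 4 by rewrite mem_pair_codes codom_f.
  exact: (allP outdeg_ok) _ code_mem.
Qed.
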